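(* Let $\nu\in\mathbb{R}$, let $J\subset(-\nu,\infty)$ be an open interval, and let $f:J\to\mathbb{R}$ be smooth. Let $q(u_1,u_2,u_3)$ be a smooth solution on $J^3$ of the system $$2(u_i-u_j)\frac{\partial^2 q}{\partial u_i\partial u_j}=\frac{\partial q}{\partial u_i}-\frac{\partial q}{\partial u_j}\quad(i,j=1,2,3),\qquad q(u,u,u)=f(u).$$ Put $\gamma=u_1+u_2+u_3+2\nu$ and define $$w_i=\big(\lambda_i(u_1,u_2,u_3)-\gamma\big)\frac{\partial q}{\partial u_i}+q,\qquad i=1,2,3.$$ Then on $\{u_3<u_2<u_1\}\cap J^3$ the functions $w_i$ satisfy $$\frac{\partial w_i}{\partial u_j}=B_{ij}(w_i-w_j),\qquad B_{ij}=\frac12\,\frac{(\lambda_i-\gamma)-2(u_i-u_j)}{(\lambda_j-\gamma)(u_i-u_j)},\quad i\neq j.$$ With the $\lambda_i$ (and hence the $w_i$) extended continuously to the boundary, the $w_i$ also satisfy the boundary conditions $$w_1(u_1,u_1,u_3)=w_2(u_1,u_1,u_3),\qquad w_3(u_1,u_1,u_3)=f(u_3),$$ $$w_1(u_1,u_3,u_3)=f(u_1),\qquad w_2(u_1,u_3,u_3)=w_3(u_1,u_3,u_3).$$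
   Context: For $-\nu<u_3<u_2<u_1$ define $$I(u_1,u_2,u_3)=\int_{u_3}^{u_2}\frac{\eta+\nu}{\sqrt{(\eta+\nu)(u_1-\eta)(u_2-\eta)(\eta-u_3)}}\,d\eta,$$ and for $i=1,2,3$ $$\lambda_i=u_1+u_2+u_3+2\nu-\frac{I}{\partial I/\partial u_i}.$$ These functions extend continuously to the boundary of their domain: - on $u_2=u_3<u_1$: $\lambda_1=3u_1+2\nu$ and $\lambda_2=\lambda_3=u_1+2u_3+2\nu-4(u_3+\nu)(u_1-u_3)/(u_1+\nu)$; - on $u_1=u_2>u_3$: $\lambda_1=\lambda_2=2u_1+u_3+2\nu$ and $\lambda_3=3u_3+2\nu$. The boundary value problem for $q$ is known to have a unique solution, which is symmetric in $u_1,u_2,u_3$. It is given explicitly by $$q(u_1,u_2,u_3)=\frac{1}{2\sqrt2\,\pi}\int_{-1}^1\int_{-1}^1\frac{f\big(\tfrac{1+\mu}{2}\tfrac{1+\tau}{2}u_1+\tfrac{1+\mu}{2}\tfrac{1-\tau}{2}u_2+\tfrac{1-\mu}{2}u_3\big)}{\sqrt{(1-\mu)(1-\tau^2)}}\,d\mu\,d\tau.$$ *)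

From Stdlib Require Import Reals.
From Coquelicot Require Import Coquelicot.
Open Scope R_scope.

Definition pd1 (g : R -> R -> R -> R) (u1 u2 u3 : R) : R :=
  Derive (fun t => g t u2 u3) u1.
Definition pd2 (g : R -> R -> R -> R) (u1 u2 u3 : R) : R :=
  Derive (fun t => g u1 t u3) u2.
Definition pd3 (g : R -> R -> R -> R) (u1 u2 u3 : R) : R :=
  Derive (fun t => g u1 u2 t) u3.
(* index i in {1,2,3} (only used for those values) *)
Definition pd (i : nat) (g : R -> R -> R -> R) : R -> R -> R -> R :=
  match i with 1%nat => pd1 g | 2%nat => pd2 g | _ => pd3 g end.
Definition coord (i : nat) (u1 u2 u3 : R) : R :=
  match i with 1%nat => u1 | 2%nat => u2 | _ => u3 end.
Definition along (j : nat) (g : R -> R -> R -> R) (u1 u2 u3 : R) : R -> R :=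
  match j with
  | 1%nat => fun t => g t u2 u3
  | 2%nat => fun t => g u1 t u3
  | _ => fun t => g u1 u2 t end.

Fixpoint Ck3 (k : nat) (U : R -> R -> R -> Prop) (g : R -> R -> R -> R) : Prop :=
  (forall u1 u2 u3, U u1 u2 u3 ->
     continuous (fun p : R * R * R => g (fst (fst p)) (snd (fst p)) (snd p))
                ((u1, u2), u3)) /\
  match k with
  | O => True
  | S k' =>
    (forall u1 u2 u3, U u1 u2 u3 ->
       ex_derive (fun t => g t u2 u3) u1 /\
       ex_derive (fun t => g u1 t u3) u2 /\
       ex_derive (fun t => g u1 u2 t) u3) /\
    Ck3 k' U (pd1 g) /\ Ck3 k' U (pd2 g) /\ Ck3 k' U (pd3 g)
  end.
Definition smooth3 (U : R -> R -> R -> Prop) (g : R -> R -> R -> R) : Prop :=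
  forall k, Ck3 k U g.

Definition smooth1 (J : R -> Prop) (f : R -> R) : Prop :=
  forall n x, J x -> ex_derive_n f n x.

Definition in_interval (a b : Rbar) (x : R) : Prop :=
  Rbar_lt a x /\ Rbar_lt x b.

Definition Iint (nu u1 u2 u3 : R) : R :=
  RInt_gen (fun eta => (eta + nu) /
      sqrt ((eta + nu) * (u1 - eta) * (u2 - eta) * (eta - u3)))
    (at_right u3) (at_left u2).

Definition gam (nu u1 u2 u3 : R) : R := u1 + u2 + u3 + 2 * nu.

(* lambda_i on the open domain u3 < u2 < u1 *)
Definition lam (nu : R) (i : nat) (u1 u2 u3 : R) : R :=
  gam nu u1 u2 u3 - Iint nu u1 u2 u3 / pd i (Iint nu) u1 u2 u3.

(* lambda_i extended continuously to the boundary (values as given) *)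
Definition lam_ext (nu : R) (i : nat) (u1 u2 u3 : R) : R :=
  if Rlt_dec u3 u2 then
    if Rlt_dec u2 u1 then lam nu i u1 u2 u3
    else (* u1 = u2 > u3 *)
      match i with
      | 1%nat | 2%nat => 2 * u1 + u3 + 2 * nu
      | _ => 3 * u3 + 2 * nu end
  else (* u2 = u3 < u1 *)
    match i with
    | 1%nat => 3 * u1 + 2 * nu
    | _ => u1 + 2 * u3 + 2 * nu - 4 * (u3 + nu) * (u1 - u3) / (u1 + nu) end.

Definition wfun (nu : R) (q : R -> R -> R -> R) (i : nat) (u1 u2 u3 : R) : R :=
  (lam_ext nu i u1 u2 u3 - gam nu u1 u2 u3) * pd i q u1 u2 u3 + q u1 u2 u3.

Definition Bcoef (nu : R) (i j : nat) (u1 u2 u3 : R) : R :=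
  / 2 * ((lam nu i u1 u2 u3 - gam nu u1 u2 u3)
          - 2 * (coord i u1 u2 u3 - coord j u1 u2 u3))
      / ((lam nu j u1 u2 u3 - gam nu u1 u2 u3)
          * (coord i u1 u2 u3 - coord j u1 u2 u3)).

From Stdlib Require Import Reals Lra Lia.
From Coquelicot Require Import Coquelicot.
Open Scope R_scope.

(* The boundary values follow from the equations alone: on the edge
   u1 = u2 the function t |-> q(t,t,y) + 2(y-t) q_3(t,t,y) has zero derivative and
   equals f(y) at t = y, and similarly on the edge u2 = u3.

   In the interior, lambda_i - gamma = -I / I_i, so w_i = q - I q_i / I_i, and
   differentiating in u_j the claimed equation reduces to the fact that I satisfies
   the same Euler-Poisson-Darboux system 2 (u_i - u_j) I_ij = I_i - I_j as q.  The
   substitution eta = u3 + (u2 - u3) sin^2 t turns I into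
   int_0^(pi/2) 2 (eta + nu)^(1/2) (u1 - eta)^(-1/2) dt with a smooth positive
   integrand; one differentiates under the integral sign, and each instance of the
   system is an integration by parts against sin t cos t.  The same formulas give
   I > 0 and I_1 < 0 < I_2, I_3, so no denominator vanishes. *)

(** * Calculus in one and two variables *)

(* Real-valued forms of Coquelicot's derivation rules: [apply] does not unify
   their [plus]/[scal] with [Rplus]/[Rmult]. *)
Lemma is_derive_Rplus (f g : R -> R) (x df dg : R) :
  is_derive f x df -> is_derive g x dg -> is_derive (fun t => f t + g t) x (df + dg).
Proof. exact (is_derive_plus f g x df dg). Qed.

Lemma is_derive_Rminus (f g : R -> R) (x df dg : R) :
  is_derive f x df -> is_derive g x dg -> is_derive (fun t => f t - g t) x (df - dg).
Proof. exact (is_derive_minus f g x df dg). Qed.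

Lemma is_derive_Ropp (f : R -> R) (x df : R) :
  is_derive f x df -> is_derive (fun t => - f t) x (- df).
Proof. exact (is_derive_opp f x df). Qed.

Lemma is_derive_Rmult (f g : R -> R) (x df dg : R) :
  is_derive f x df -> is_derive g x dg ->
  is_derive (fun t => f t * g t) x (df * g x + f x * dg).
Proof. intros Df Dg. apply (is_derive_mult f g x df dg); auto. intros; apply Rmult_comm. Qed.

Lemma is_derive_Rscal (c : R) (f : R -> R) (x df : R) :
  is_derive f x df -> is_derive (fun t => c * f t) x (c * df).
Proof. exact (is_derive_scal f x c df). Qed.

Lemma is_derive_Rcomp (f g : R -> R) (x df dg : R) :
  is_derive f (g x) df -> is_derive g x dg -> is_derive (fun t => f (g t)) x (dg * df).
Proof. exact (is_derive_comp f g x df dg). Qed.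

Lemma is_derive_eq (f : R -> R) (x l l' : R) : is_derive f x l -> l = l' -> is_derive f x l'.
Proof. now intros D <-. Qed.

Lemma is_derive_Rext_loc (f g : R -> R) (x l : R) :
  locally x (fun t => f t = g t) -> is_derive f x l -> is_derive g x l.
Proof. exact (is_derive_ext_loc f g x l). Qed.

Lemma continuous_of_is_derive (f : R -> R) (x l : R) : is_derive f x l -> continuous f x.
Proof. intros D. apply (ex_derive_continuous (K:=R_AbsRing) (V:=R_NormedModule)). now exists l. Qed.

Lemma DL_pol_1 f x y dx dy :
  DL_pol 1 f x y dx dy =
  f x y + (Derive (fun t => f t y) x * dx + Derive (fun z => f x z) y * dy).
Proof. unfold DL_pol, differential, partial_derive, Binomial.C; simpl; field. Qed.

(* The first-order Taylor-Lagrange bound gives a remainder O(max(|dx|,|dy|)^2). *)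
Lemma differentiable_pt_lim_C2 f x y :
  locally_2d (fun u v => ex_diff_n f 2 u v) x y ->
  differentiable_pt_lim f x y (Derive (fun t => f t y) x) (Derive (fun z => f x z) y).
Proof.
  intros Hf eps.
  destruct (Taylor_Lagrange_2d f 1 x y Hf) as [D [d Hd]].
  set (C := Rabs D + 1).
  assert (HC : 0 < C) by (pose proof (Rabs_pos D); unfold C; lra).
  assert (Hr : 0 < eps / C) by (apply Rdiv_lt_0_compat; [apply cond_pos | exact HC]).
  exists (mkposreal _ (Rmin_stable_in_posreal d (mkposreal _ Hr))).
  intros u v Hu Hv; simpl in Hu, Hv.
  pose proof (Rmin_l d (eps / C)); pose proof (Rmin_r d (eps / C)).
  specialize (Hd u v ltac:(lra) ltac:(lra)); rewrite DL_pol_1 in Hd; simpl in Hd.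
  set (m := Rmax (Rabs (u - x)) (Rabs (v - y))) in *.
  assert (Hm0 : 0 <= m) by (eapply Rle_trans; [apply Rabs_pos | apply Rmax_l]).
  assert (Hm : m <= eps / C) by (apply Rmax_lub; lra).
  assert (HmC : C * m <= eps).
  { apply Rle_trans with (C * (eps / C)); [apply Rmult_le_compat_l; lra | right; field; lra]. }
  eapply Rle_trans; [| apply (Rmult_le_compat_r m _ _ Hm0 HmC)].
  replace (f u v - f x y - _) with (f u v - (f x y + (Derive (fun t => f t y) x * (u - x)
    + Derive (fun z => f x z) y * (v - y)))) by ring.
  eapply Rle_trans; [exact Hd|].
  rewrite Rmult_1_r. pose proof (Rle_abs D). unfold C. nra.
Qed.

Definition box3 (a b : Rbar) (u1 u2 u3 : R) : Prop :=
  in_interval a b u1 /\ in_interval a b u2 /\ in_interval a b u3.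

Lemma continuity_2d_pt_slice12 (g : R -> R -> R -> R) x y z :
  continuous (fun p : R * R * R => g (fst (fst p)) (snd (fst p)) (snd p)) ((x, y), z) ->
  continuity_2d_pt (fun u v => g u v z) x y.
Proof.
  intros H. apply continuity_2d_pt_filterlim.
  apply (continuous_comp_2 (fun w : R * R => w) (fun _ => z)
           (fun (p : R * R) (t : R) => g (fst p) (snd p) t)); auto.
  apply continuous_id. apply continuous_const.
Qed.

Lemma continuity_2d_pt_slice23 (g : R -> R -> R -> R) x y z :
  continuous (fun p : R * R * R => g (fst (fst p)) (snd (fst p)) (snd p)) ((x, y), z) ->
  continuity_2d_pt (fun u v => g x u v) y z.
Proof.
  intros H. apply continuity_2d_pt_filterlim.
  apply (continuous_comp_2 (fun w : R * R => (x, fst w)) (fun w => snd w)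
           (fun (p : R * R) (t : R) => g (fst p) (snd p) t)); auto.
  - apply (continuous_comp_2 (fun _ : R * R => x) (fun w : R * R => fst w) pair).
    apply continuous_const. apply continuous_fst.
    apply (continuous_ext (fun w : R * R => w)); [intros []; reflexivity | apply continuous_id].
  - apply continuous_snd.
Qed.

Lemma Ck3_ex_diff_n12 U n : forall g x y z, Ck3 n U g -> U x y z ->
  ex_diff_n (fun u v => g u v z) n x y.
Proof.
  induction n as [|n IH]; intros g x y z Hg HU.
  - split; [apply continuity_2d_pt_slice12, (proj1 Hg _ _ _ HU) | exact I].
  - destruct Hg as [Hc [Hd [H1 [H2 _]]]]. destruct (Hd _ _ _ HU) as [D1 [D2 _]].
    repeat split; auto; [apply continuity_2d_pt_slice12, (Hc _ _ _ HU)
                        | apply (IH (pd1 g)) | apply (IH (pd2 g))]; assumption.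
Qed.

Lemma Ck3_ex_diff_n23 U n : forall g x y z, Ck3 n U g -> U x y z ->
  ex_diff_n (fun u v => g x u v) n y z.
Proof.
  induction n as [|n IH]; intros g x y z Hg HU.
  - split; [apply continuity_2d_pt_slice23, (proj1 Hg _ _ _ HU) | exact I].
  - destruct Hg as [Hc [Hd [_ [H2 H3]]]]. destruct (Hd _ _ _ HU) as [_ [D2 D3]].
    repeat split; auto; [apply continuity_2d_pt_slice23, (Hc _ _ _ HU)
                        | apply (IH (pd2 g)) | apply (IH (pd3 g))]; assumption.
Qed.

Lemma in_interval_locally a b x : in_interval a b x -> locally x (in_interval a b).
Proof. intros [H1 H2]. apply (locally_interval _ x a b H1 H2). now split. Qed.

Lemma in_interval_between a b x y z : in_interval a b x -> in_interval a b y ->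
  Rmin x y <= z <= Rmax x y -> in_interval a b z.
Proof.
  intros [Hx1 Hx2] [Hy1 Hy2] [Hz1 Hz2]; split.
  - destruct (Rle_dec x y); [rewrite Rmin_left in Hz1 by lra | rewrite Rmin_right in Hz1 by lra].
    + apply (Rbar_lt_le_trans _ (Finite x)); auto.
    + apply (Rbar_lt_le_trans _ (Finite y)); auto.
  - destruct (Rle_dec x y); [rewrite Rmax_right in Hz2 by lra | rewrite Rmax_left in Hz2 by lra].
    + apply (Rbar_le_lt_trans _ (Finite y)); auto.
    + apply (Rbar_le_lt_trans _ (Finite x)); auto.
Qed.

Lemma is_derive_diag12 a b g y t : Ck3 2 (box3 a b) g -> in_interval a b y -> in_interval a b t ->
  is_derive (fun s => g s s y) t (pd1 g t t y + pd2 g t t y).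
Proof.
  intros Hg Hy Ht. apply is_derive_Reals.
  replace (pd1 g t t y + pd2 g t t y) with (pd1 g t t y * 1 + pd2 g t t y * 1) by ring.
  apply (derivable_pt_lim_comp_2d (fun u v => g u v y)); try apply derivable_pt_lim_id.
  apply differentiable_pt_lim_C2. destruct (in_interval_locally a b t Ht) as [e He].
  exists e; intros u v Hu Hv.
  apply (Ck3_ex_diff_n12 (box3 a b)); [exact Hg | exact (conj (He u Hu) (conj (He v Hv) Hy))].
Qed.

Lemma is_derive_diag23 a b g x t : Ck3 2 (box3 a b) g -> in_interval a b x -> in_interval a b t ->
  is_derive (fun s => g x s s) t (pd2 g x t t + pd3 g x t t).
Proof.
  intros Hg Hx Ht. apply is_derive_Reals.
  replace (pd2 g x t t + pd3 g x t t) with (pd2 g x t t * 1 + pd3 g x t t * 1) by ring.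
  apply (derivable_pt_lim_comp_2d (fun u v => g x u v)); try apply derivable_pt_lim_id.
  apply differentiable_pt_lim_C2. destruct (in_interval_locally a b t Ht) as [e He].
  exists e; intros u v Hu Hv.
  apply (Ck3_ex_diff_n23 (box3 a b)); [exact Hg | exact (conj Hx (conj (He u Hu) (He v Hv)))].
Qed.

Lemma is_derive_0_const_interval a b (h : R -> R) x y :
  (forall t, in_interval a b t -> is_derive h t 0) ->
  in_interval a b x -> in_interval a b y -> h x = h y.
Proof.
  intros Hd Hx Hy. assert (Hb : forall t, Rmin y x <= t <= Rmax y x -> in_interval a b t).
  { intros t Ht. apply (in_interval_between a b x y); auto. now rewrite Rmin_comm, Rmax_comm. }
  destruct (MVT_gen h y x (fun _ => 0)) as [c [_ Hc]]; [| | lra].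
  - intros t Ht. apply Hd, Hb; lra.
  - intros t Ht. apply continuity_pt_filterlim, (continuous_of_is_derive _ _ 0), Hd, Hb, Ht.
Qed.

Lemma Ck3_pd U n g i : Ck3 (S n) U g -> Ck3 n U (pd i g).
Proof. intros [_ [_ [H1 [H2 H3]]]]. now destruct i as [|[|[|i]]]. Qed.

Lemma along_coord j (g : R -> R -> R -> R) u1 u2 u3 :
  along j g u1 u2 u3 (coord j u1 u2 u3) = g u1 u2 u3.
Proof. now destruct j as [|[|[|j]]]. Qed.

Lemma is_derive_along U g j u1 u2 u3 : Ck3 1 U g -> U u1 u2 u3 ->
  is_derive (along j g u1 u2 u3) (coord j u1 u2 u3) (pd j g u1 u2 u3).
Proof.
  intros [_ [Hd _]] HU. destruct (Hd _ _ _ HU) as [D1 [D2 D3]].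
  destruct j as [|[|[|j]]]; apply Derive_correct; assumption.
Qed.

(** * Boundary values *)

Section BoundaryValues.

Variables (a b : Rbar) (f : R -> R) (q : R -> R -> R -> R).
Hypothesis q_smooth : smooth3 (box3 a b) q.
Hypothesis q_pde : forall (i j : nat) (u1 u2 u3 : R),
  (1 <= i <= 3)%nat -> (1 <= j <= 3)%nat ->
  in_interval a b u1 -> in_interval a b u2 -> in_interval a b u3 ->
  2 * (coord i u1 u2 u3 - coord j u1 u2 u3) * pd i (pd j q) u1 u2 u3
  = pd i q u1 u2 u3 - pd j q u1 u2 u3.
Hypothesis q_diag : forall u, in_interval a b u -> q u u u = f u.

Lemma q_boundary12 x y : in_interval a b x -> in_interval a b y ->
  q x x y + 2 * (y - x) * pd3 q x x y = f y.
Proof.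
  intros Hx Hy. rewrite <- q_diag by exact Hy.
  replace (q y y y) with (q y y y + 2 * (y - y) * pd3 q y y y) by ring.
  apply (is_derive_0_const_interval a b (fun t => q t t y + 2 * (y - t) * pd3 q t t y)); auto.
  intros t Ht.
  pose proof (q_pde 1 3 t t y ltac:(lia) ltac:(lia) Ht Ht Hy) as P13.
  pose proof (q_pde 2 3 t t y ltac:(lia) ltac:(lia) Ht Ht Hy) as P23.
  simpl in P13, P23. eapply is_derive_eq.
  - apply is_derive_Rplus; [apply (is_derive_diag12 a b); auto; apply q_smooth|].
    apply is_derive_Rmult;
      [apply is_derive_Rscal, is_derive_Rminus; [apply is_derive_const | apply is_derive_id]|].
    apply (is_derive_diag12 a b); auto. apply (q_smooth 3%nat).
  - cbv beta; unfold zero, one; simpl; nra.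
Qed.

Lemma q_boundary23 x y : in_interval a b x -> in_interval a b y ->
  q x y y + 2 * (x - y) * pd1 q x y y = f x.
Proof.
  intros Hx Hy. rewrite <- q_diag by exact Hx.
  replace (q x x x) with (q x x x + 2 * (x - x) * pd1 q x x x) by ring.
  apply (is_derive_0_const_interval a b (fun t => q x t t + 2 * (x - t) * pd1 q x t t)); auto.
  intros t Ht.
  pose proof (q_pde 2 1 x t t ltac:(lia) ltac:(lia) Hx Ht Ht) as P21.
  pose proof (q_pde 3 1 x t t ltac:(lia) ltac:(lia) Hx Ht Ht) as P31.
  simpl in P21, P31. eapply is_derive_eq.
  - apply is_derive_Rplus; [apply (is_derive_diag23 a b); auto; apply q_smooth|].
    apply is_derive_Rmult;
      [apply is_derive_Rscal, is_derive_Rminus; [apply is_derive_const | apply is_derive_id]|].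
    apply (is_derive_diag23 a b); auto. apply (q_smooth 3%nat).
  - cbv beta; unfold zero, one; simpl; nra.
Qed.

Lemma wfun_boundary nu u1 u3 :
  in_interval a b u1 -> in_interval a b u3 -> u3 < u1 ->
  wfun nu q 1 u1 u1 u3 = wfun nu q 2 u1 u1 u3 /\
  wfun nu q 3 u1 u1 u3 = f u3 /\
  wfun nu q 1 u1 u3 u3 = f u1 /\
  wfun nu q 2 u1 u3 u3 = wfun nu q 3 u1 u3 u3.
Proof.
  intros Hu1 Hu3 H31.
  pose proof (q_boundary12 u1 u3 Hu1 Hu3) as B12.
  pose proof (q_boundary23 u1 u3 Hu1 Hu3) as B23.
  (* On u2 = u3 the (2,3) equation degenerates to q_2 = q_3. *)
  pose proof (q_pde 2 3 u1 u3 u3 ltac:(lia) ltac:(lia) Hu1 Hu3 Hu3) as P23. simpl in P23.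
  unfold wfun, lam_ext, gam.
  destruct (Rlt_dec u3 u1); [|lra]. destruct (Rlt_dec u1 u1); [lra|].
  destruct (Rlt_dec u3 u3); [lra|]. simpl.
  repeat split; [ring | rewrite <- B12; ring | rewrite <- B23; ring |].
  replace (pd2 q u1 u3 u3) with (pd3 q u1 u3 u3) by lra. ring.
Qed.

End BoundaryValues.

(** * The integral I after substitution *)

Definition region (nu u1 u2 u3 : R) : Prop := - nu < u3 /\ u3 < u2 /\ u2 < u1.

Definition alongP (j : nat) (P : R -> R -> R -> Prop) (u1 u2 u3 : R) : R -> Prop :=
  match j with
  | 1%nat => fun t => P t u2 u3
  | 2%nat => fun t => P u1 t u3
  | _ => fun t => P u1 u2 t end.

Lemma alongP_coord j P u1 u2 u3 : P u1 u2 u3 -> alongP j P u1 u2 u3 (coord j u1 u2 u3).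
Proof. now destruct j as [|[|[|j]]]. Qed.

Lemma along_ext_in j P (g h : R -> R -> R -> R) u1 u2 u3 y :
  (forall x1 x2 x3, P x1 x2 x3 -> g x1 x2 x3 = h x1 x2 x3) ->
  alongP j P u1 u2 u3 y -> along j g u1 u2 u3 y = along j h u1 u2 u3 y.
Proof. intros E; destruct j as [|[|[|j]]]; apply E. Qed.

Lemma pd_along j g u1 u2 u3 : pd j g u1 u2 u3 = Derive (along j g u1 u2 u3) (coord j u1 u2 u3).
Proof. now destruct j as [|[|[|j]]]. Qed.

Lemma region_along_locally nu j u1 u2 u3 : region nu u1 u2 u3 ->
  locally (coord j u1 u2 u3) (alongP j (region nu) u1 u2 u3).
Proof.
  intros [H1 [H2 H3]].
  assert (He : 0 < Rmin (Rmin (u1 - u2) (u2 - u3)) (u3 + nu)) by (repeat apply Rmin_pos; lra).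
  exists (mkposreal _ He); intros y Hy.
  change (Rabs (y - coord j u1 u2 u3) < Rmin (Rmin (u1 - u2) (u2 - u3)) (u3 + nu)) in Hy.
  apply Rabs_def2 in Hy.
  pose proof (Rmin_l (Rmin (u1 - u2) (u2 - u3)) (u3 + nu)).
  pose proof (Rmin_r (Rmin (u1 - u2) (u2 - u3)) (u3 + nu)).
  pose proof (Rmin_l (u1 - u2) (u2 - u3)); pose proof (Rmin_r (u1 - u2) (u2 - u3)).
  destruct j as [|[|[|j]]]; unfold region; simpl in *; lra.
Qed.

Definition sin2 (t : R) : R := sin t ^ 2.

(* Under eta = u3 + (u2 - u3) sin^2 t, these are eta + nu and u1 - eta. *)
Definition eta_nu (nu u2 u3 t : R) : R := nu + u3 + (u2 - u3) * sin2 t.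
Definition u1_eta (u1 u2 u3 t : R) : R := u1 - u3 - (u2 - u3) * sin2 t.

Definition half_pow (n : nat) (x : R) : R := sqrt x / x ^ n.

Definition kern (nu : R) (n m : nat) (t u1 u2 u3 : R) : R :=
  half_pow n (eta_nu nu u2 u3 t) * half_pow m (u1_eta u1 u2 u3 t).

(* The derivatives of eta + nu and of u1 - eta with respect to u_j. *)
Definition d_eta (j : nat) (t : R) : R :=
  match j with 1%nat => 0 | 2%nat => sin2 t | _ => 1 - sin2 t end.
Definition d_u1_eta (j : nat) (t : R) : R :=
  match j with 1%nat => 1 | _ => - d_eta j t end.

Lemma sin2_bound t : 0 <= sin2 t <= 1.
Proof. unfold sin2. pose proof (sin2_cos2 t). unfold Rsqr in H. nra. Qed.

Lemma eta_nu_pos nu u1 u2 u3 t : region nu u1 u2 u3 -> 0 < eta_nu nu u2 u3 t.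
Proof. intros [H1 [H2 H3]]. unfold eta_nu. pose proof (sin2_bound t). nra. Qed.

Lemma u1_eta_pos nu u1 u2 u3 t : region nu u1 u2 u3 -> 0 < u1_eta u1 u2 u3 t.
Proof. intros [H1 [H2 H3]]. unfold u1_eta. pose proof (sin2_bound t). nra. Qed.

Lemma half_pow_pos n x : 0 < x -> 0 < half_pow n x.
Proof. intros. apply Rdiv_lt_0_compat; [apply sqrt_lt_R0 | apply pow_lt]; assumption. Qed.

Lemma kern_pos nu n m t u1 u2 u3 : region nu u1 u2 u3 -> 0 < kern nu n m t u1 u2 u3.
Proof.
  intros HR. apply Rmult_lt_0_compat; apply half_pow_pos;
    [apply (eta_nu_pos _ u1) | apply (u1_eta_pos nu)]; exact HR.
Qed.

Lemma is_derive_half_pow (P : R -> R) (x dp : R) n : is_derive P x dp -> 0 < P x ->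
  is_derive (fun t => half_pow n (P t)) x (dp * (/ 2 - INR n) * half_pow (S n) (P x)).
Proof.
  intros D Hp. unfold half_pow.
  assert (Hn : P x ^ n <> 0) by (apply pow_nonzero; lra).
  eapply is_derive_eq;
    [apply (is_derive_div _ _ x _ _ (is_derive_sqrt P x dp D Hp) (is_derive_pow P n x dp D) Hn)|].
  assert (Hs : 0 < sqrt (P x)) by (apply sqrt_lt_R0; auto).
  assert (E : sqrt (P x) * sqrt (P x) = P x) by (apply sqrt_sqrt; lra).
  cbv beta. set (s := sqrt (P x)) in *. clearbody s. rewrite <- E.
  destruct n as [|n].
  - simpl. field. lra.
  - rewrite S_INR. change (Init.Nat.pred (S n)) with n.
    assert ((s * s) ^ n <> 0) by (apply pow_nonzero; nra).
    simpl. field. split; [assumption | lra].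
Qed.

Lemma is_derive_half_pow_mult (P Q : R -> R) (x dp dq : R) n m :
  is_derive P x dp -> is_derive Q x dq -> 0 < P x -> 0 < Q x ->
  is_derive (fun t => half_pow n (P t) * half_pow m (Q t)) x
    (dp * (/ 2 - INR n) * half_pow (S n) (P x) * half_pow m (Q x)
     + dq * (/ 2 - INR m) * half_pow n (P x) * half_pow (S m) (Q x)).
Proof.
  intros DP DQ HP HQ.
  eapply is_derive_eq; [apply is_derive_Rmult; apply is_derive_half_pow; eassumption|].
  cbv beta; ring.
Qed.

Lemma is_derive_kern_along nu n m t j u1 u2 u3 y : alongP j (region nu) u1 u2 u3 y ->
  is_derive (along j (kern nu n m t) u1 u2 u3) y
    (d_eta j t * (/ 2 - INR n) * along j (kern nu (S n) m t) u1 u2 u3 y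
     + d_u1_eta j t * (/ 2 - INR m) * along j (kern nu n (S m) t) u1 u2 u3 y).
Proof.
  intros HR. destruct j as [|[|[|j]]]; simpl in HR |- *; unfold kern;
    (eapply is_derive_eq; [apply is_derive_half_pow_mult; unfold eta_nu, u1_eta;
      [auto_derive; [exact I | reflexivity] .. | eapply eta_nu_pos | eapply u1_eta_pos];
      exact HR | unfold sin2; ring]).
Qed.

Lemma continuity_pt_half_pow n x : 0 < x -> continuity_pt (half_pow n) x.
Proof.
  intros Hx. apply continuity_pt_filterlim.
  apply (continuous_of_is_derive _ _ (1 * (/ 2 - INR n) * half_pow (S n) x)).
  apply (is_derive_half_pow (fun t => t)); [exact (is_derive_id x) | exact Hx].
Qed.

Lemma continuity_2d_pt_sin2 y t : continuity_2d_pt (fun _ s => sin2 s) y t.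
Proof.
  apply (continuity_1d_2d_pt_comp sin2 (fun _ s => s)); [| apply continuity_2d_pt_id2].
  apply continuity_pt_filterlim, (continuous_of_is_derive _ _ (2 * sin t * cos t)).
  unfold sin2; auto_derive; [exact I | ring].
Qed.

Ltac continuity_2d_with leaf :=
  repeat match goal with
  | |- continuity_2d_pt (fun _ _ => _ + _) _ _ => apply continuity_2d_pt_plus
  | |- continuity_2d_pt (fun _ _ => _ - _) _ _ => apply continuity_2d_pt_minus
  | |- continuity_2d_pt (fun _ _ => _ * _) _ _ => apply continuity_2d_pt_mult
  | |- continuity_2d_pt (fun _ _ => - _) _ _ => apply continuity_2d_pt_opp
  | |- continuity_2d_pt (fun _ s => sin2 s) _ _ => apply continuity_2d_pt_sin2
  | |- continuity_2d_pt (fun z _ => z) _ _ => apply continuity_2d_pt_id1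
  | |- continuity_2d_pt _ _ _ => leaf
  | |- continuity_2d_pt (fun _ _ => _) _ _ => apply continuity_2d_pt_const
  end.

Lemma continuity_2d_pt_d_eta j y t : continuity_2d_pt (fun _ s => d_eta j s) y t.
Proof. destruct j as [|[|[|j]]]; simpl; continuity_2d_with fail. Qed.

Lemma continuity_2d_pt_d_u1_eta j y t : continuity_2d_pt (fun _ s => d_u1_eta j s) y t.
Proof. destruct j as [|[|[|j]]]; simpl; continuity_2d_with fail. Qed.

Lemma continuity_2d_pt_kern_along nu n m j u1 u2 u3 y t : alongP j (region nu) u1 u2 u3 y ->
  continuity_2d_pt (fun z s => along j (kern nu n m s) u1 u2 u3 z) y t.
Proof.
  intros HR. destruct j as [|[|[|j]]]; simpl in HR |- *; unfold kern;
    apply continuity_2d_pt_mult; (apply (continuity_1d_2d_pt_comp (half_pow _));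
    [apply continuity_pt_half_pow; first [eapply eta_nu_pos | eapply u1_eta_pos]; exact HR
    | unfold eta_nu, u1_eta; continuity_2d_with fail]).
Qed.

Ltac continuity_2d_kern :=
  continuity_2d_with ltac:(first [ apply continuity_2d_pt_d_eta | apply continuity_2d_pt_d_u1_eta
                                 | apply continuity_2d_pt_kern_along; assumption ]).

Definition Jint (F : R -> R) : R := RInt F 0 (PI / 2).

Definition I_ker (nu t u1 u2 u3 : R) : R := 2 * kern nu 0 1 t u1 u2 u3.
Definition dI_ker (nu : R) (j : nat) (t u1 u2 u3 : R) : R :=
  d_eta j t * kern nu 1 1 t u1 u2 u3 - d_u1_eta j t * kern nu 0 2 t u1 u2 u3.
Definition ddI_ker (nu : R) (i j : nat) (t u1 u2 u3 : R) : R :=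
  - / 2 * d_eta i t * d_eta j t * kern nu 2 1 t u1 u2 u3
  - / 2 * (d_eta i t * d_u1_eta j t + d_u1_eta i t * d_eta j t) * kern nu 1 2 t u1 u2 u3
  + 3 / 2 * d_u1_eta i t * d_u1_eta j t * kern nu 0 3 t u1 u2 u3.

Lemma along_I_ker nu t j u1 u2 u3 y :
  along j (I_ker nu t) u1 u2 u3 y = 2 * along j (kern nu 0 1 t) u1 u2 u3 y.
Proof. now destruct j as [|[|[|j]]]. Qed.

Lemma along_dI_ker nu i t j u1 u2 u3 y :
  along j (dI_ker nu i t) u1 u2 u3 y =
  d_eta i t * along j (kern nu 1 1 t) u1 u2 u3 y - d_u1_eta i t * along j (kern nu 0 2 t) u1 u2 u3 y.
Proof. now destruct j as [|[|[|j]]]. Qed.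

Lemma along_ddI_ker nu i k t j u1 u2 u3 y :
  along j (ddI_ker nu i k t) u1 u2 u3 y =
  - / 2 * d_eta i t * d_eta k t * along j (kern nu 2 1 t) u1 u2 u3 y
  - / 2 * (d_eta i t * d_u1_eta k t + d_u1_eta i t * d_eta k t) * along j (kern nu 1 2 t) u1 u2 u3 y
  + 3 / 2 * d_u1_eta i t * d_u1_eta k t * along j (kern nu 0 3 t) u1 u2 u3 y.
Proof. now destruct j as [|[|[|j]]]. Qed.

Lemma is_derive_I_ker_along nu t j u1 u2 u3 y : alongP j (region nu) u1 u2 u3 y ->
  is_derive (along j (I_ker nu t) u1 u2 u3) y (along j (dI_ker nu j t) u1 u2 u3 y).
Proof.
  intros HR. rewrite along_dI_ker.
  eapply is_derive_ext; [intros z; symmetry; apply along_I_ker|].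
  eapply is_derive_eq; [apply is_derive_Rscal, is_derive_kern_along, HR|].
  rewrite ?S_INR, ?INR_0. field.
Qed.

Lemma is_derive_dI_ker_along nu i t j u1 u2 u3 y : alongP j (region nu) u1 u2 u3 y ->
  is_derive (along j (dI_ker nu i t) u1 u2 u3) y (along j (ddI_ker nu i j t) u1 u2 u3 y).
Proof.
  intros HR. rewrite along_ddI_ker.
  eapply is_derive_ext; [intros z; symmetry; apply along_dI_ker|].
  eapply is_derive_eq;
    [apply is_derive_Rminus; apply is_derive_Rscal, is_derive_kern_along, HR|].
  rewrite ?S_INR, ?INR_0. field.
Qed.

Lemma continuity_2d_pt_I_ker_along nu j u1 u2 u3 y t : alongP j (region nu) u1 u2 u3 y ->
  continuity_2d_pt (fun z s => along j (I_ker nu s) u1 u2 u3 z) y t.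
Proof.
  intros HR. eapply continuity_2d_pt_ext; [intros; symmetry; apply along_I_ker|].
  continuity_2d_kern.
Qed.

Lemma continuity_2d_pt_dI_ker_along nu i j u1 u2 u3 y t : alongP j (region nu) u1 u2 u3 y ->
  continuity_2d_pt (fun z s => along j (dI_ker nu i s) u1 u2 u3 z) y t.
Proof.
  intros HR. eapply continuity_2d_pt_ext; [intros; symmetry; apply along_dI_ker|].
  continuity_2d_kern.
Qed.

Lemma continuity_2d_pt_ddI_ker_along nu i k j u1 u2 u3 y t : alongP j (region nu) u1 u2 u3 y ->
  continuity_2d_pt (fun z s => along j (ddI_ker nu i k s) u1 u2 u3 z) y t.
Proof.
  intros HR. eapply continuity_2d_pt_ext; [intros; symmetry; apply along_ddI_ker|].
  continuity_2d_kern.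
Qed.

Lemma continuous_of_continuity_2d_pt (F : R -> R -> R) y t : continuity_2d_pt F y t -> continuous (F y) t.
Proof.
  intros H. apply continuity_2d_pt_filterlim in H.
  apply (continuous_comp_2 (fun _ : R => y) (fun z : R => z) F); auto.
  apply continuous_const. apply continuous_id.
Qed.

Lemma is_derive_Jint_param (F dF : R -> R -> R) (x : R) :
  locally x (fun y => forall t, is_derive (fun z => F z t) y (dF y t)) ->
  (forall t, continuity_2d_pt dF x t) ->
  locally x (fun y => forall t, continuous (F y) t) ->
  is_derive (fun y => Jint (F y)) x (Jint (dF x)).
Proof.
  intros HD HC HF.
  assert (E : Jint (dF x) = RInt (fun t => Derive (fun u => F u t) x) 0 (PI / 2)).
  { apply RInt_ext. intros t _. symmetry. apply is_derive_unique, (locally_singleton _ _ HD). }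
  rewrite E. apply (is_derive_RInt_param F 0 (PI / 2) x).
  - eapply filter_imp; [| exact HD]. intros y Hy t _. exists (dF y t). apply Hy.
  - intros t _. eapply continuity_2d_pt_ext_loc; [| apply (HC t)].
    destruct HD as [d Hd]. exists d. intros u v Hu _.
    symmetry. apply is_derive_unique, Hd, Hu.
  - eapply filter_imp; [| exact HF]. intros y Hy.
    apply (ex_RInt_continuous (V:=R_CompleteNormedModule)). intros z _. apply Hy.
Qed.

Lemma along_Jint j (K : R -> R -> R -> R -> R) u1 u2 u3 y :
  along j (fun x1 x2 x3 => Jint (fun t => K t x1 x2 x3)) u1 u2 u3 y
  = Jint (fun t => along j (K t) u1 u2 u3 y).
Proof. now destruct j as [|[|[|j]]]. Qed.

Lemma is_derive_Jint_along nu j (K dK : R -> R -> R -> R -> R) u1 u2 u3 :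
  region nu u1 u2 u3 ->
  (forall y t, alongP j (region nu) u1 u2 u3 y ->
     is_derive (along j (K t) u1 u2 u3) y (along j (dK t) u1 u2 u3 y)) ->
  (forall y t, alongP j (region nu) u1 u2 u3 y ->
     continuity_2d_pt (fun z s => along j (K s) u1 u2 u3 z) y t) ->
  (forall t, continuity_2d_pt (fun z s => along j (dK s) u1 u2 u3 z) (coord j u1 u2 u3) t) ->
  is_derive (along j (fun x1 x2 x3 => Jint (fun t => K t x1 x2 x3)) u1 u2 u3) (coord j u1 u2 u3)
    (Jint (fun t => dK t u1 u2 u3)).
Proof.
  intros HR HD HK HdK.
  apply (is_derive_ext (fun y => Jint (fun t => along j (K t) u1 u2 u3 y)));
    [intros y; symmetry; apply along_Jint|].
  replace (Jint (fun t => dK t u1 u2 u3))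
    with (Jint (fun t => along j (dK t) u1 u2 u3 (coord j u1 u2 u3)))
    by (apply RInt_ext; intros; apply along_coord).
  apply (is_derive_Jint_param (fun y t => along j (K t) u1 u2 u3 y)
                              (fun y t => along j (dK t) u1 u2 u3 y)); [| exact HdK |];
    (eapply filter_imp; [| apply (region_along_locally nu j u1 u2 u3 HR)]); intros y Hy t.
  - apply HD, Hy.
  - apply (continuous_of_continuity_2d_pt (fun z s => along j (K s) u1 u2 u3 z)), HK, Hy.
Qed.

Lemma is_derive_Jint_I_along nu j u1 u2 u3 : region nu u1 u2 u3 ->
  is_derive (along j (fun x1 x2 x3 => Jint (fun t => I_ker nu t x1 x2 x3)) u1 u2 u3)
    (coord j u1 u2 u3) (Jint (fun t => dI_ker nu j t u1 u2 u3)).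
Proof.
  intros HR. apply (is_derive_Jint_along nu); [exact HR | intros y t Hy .. | intros t].
  - apply is_derive_I_ker_along, Hy.
  - apply continuity_2d_pt_I_ker_along, Hy.
  - apply continuity_2d_pt_dI_ker_along, alongP_coord, HR.
Qed.

Lemma is_derive_Jint_dI_along nu i j u1 u2 u3 : region nu u1 u2 u3 ->
  is_derive (along j (fun x1 x2 x3 => Jint (fun t => dI_ker nu i t x1 x2 x3)) u1 u2 u3)
    (coord j u1 u2 u3) (Jint (fun t => ddI_ker nu i j t u1 u2 u3)).
Proof.
  intros HR. apply (is_derive_Jint_along nu); [exact HR | intros y t Hy .. | intros t].
  - apply is_derive_dI_ker_along, Hy.
  - apply continuity_2d_pt_dI_ker_along, Hy.
  - apply continuity_2d_pt_ddI_ker_along, alongP_coord, HR.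
Qed.

Lemma is_derive_kern_t nu n m t u1 u2 u3 : region nu u1 u2 u3 ->
  is_derive (fun s => kern nu n m s u1 u2 u3) t
    (2 * (u2 - u3) * (sin t * cos t) *
     ((/ 2 - INR n) * kern nu (S n) m t u1 u2 u3 - (/ 2 - INR m) * kern nu n (S m) t u1 u2 u3)).
Proof.
  intros HR. unfold kern.
  eapply is_derive_eq; [apply is_derive_half_pow_mult; unfold eta_nu, u1_eta, sin2;
    [auto_derive; [exact I | reflexivity] .. | eapply eta_nu_pos | eapply u1_eta_pos]; exact HR|].
  ring.
Qed.

Lemma continuous_I_ker nu u1 u2 u3 t : region nu u1 u2 u3 -> continuous (fun s => I_ker nu s u1 u2 u3) t.
Proof.
  intros HR. apply (continuous_of_continuity_2d_pt (fun z s => along 1 (I_ker nu s) u1 u2 u3 z) u1).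
  apply continuity_2d_pt_I_ker_along, (alongP_coord 1), HR.
Qed.

Lemma continuous_dI_ker nu i u1 u2 u3 t : region nu u1 u2 u3 ->
  continuous (fun s => dI_ker nu i s u1 u2 u3) t.
Proof.
  intros HR. apply (continuous_of_continuity_2d_pt (fun z s => along 1 (dI_ker nu i s) u1 u2 u3 z) u1).
  apply continuity_2d_pt_dI_ker_along, (alongP_coord 1), HR.
Qed.

Lemma continuous_ddI_ker nu i j u1 u2 u3 t : region nu u1 u2 u3 ->
  continuous (fun s => ddI_ker nu i j s u1 u2 u3) t.
Proof.
  intros HR. apply (continuous_of_continuity_2d_pt (fun z s => along 1 (ddI_ker nu i j s) u1 u2 u3 z) u1).
  apply continuity_2d_pt_ddI_ker_along, (alongP_coord 1), HR.
Qed.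

Lemma Jint_by_parts (A B C H : R -> R) :
  (forall t, is_derive H t (A t - (B t - C t))) ->
  (forall t, continuous A t) -> (forall t, continuous B t) -> (forall t, continuous C t) ->
  H 0 = 0 -> H (PI / 2) = 0 ->
  Jint A = Jint B - Jint C.
Proof.
  intros HD cA cB cC H0 H1.
  assert (eA : ex_RInt A 0 (PI / 2)) by (apply (ex_RInt_continuous (V:=R_CompleteNormedModule)); auto).
  assert (eB : ex_RInt B 0 (PI / 2)) by (apply (ex_RInt_continuous (V:=R_CompleteNormedModule)); auto).
  assert (eC : ex_RInt C 0 (PI / 2)) by (apply (ex_RInt_continuous (V:=R_CompleteNormedModule)); auto).
  assert (eBC : ex_RInt (fun t => B t - C t) 0 (PI / 2))
    by (apply (ex_RInt_minus (V:=R_CompleteNormedModule)); auto).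
  assert (I : is_RInt (fun t => A t - (B t - C t)) 0 (PI / 2) (minus (H (PI / 2)) (H 0))).
  { apply (is_RInt_derive (V:=R_CompleteNormedModule) H); [intros; apply HD|].
    intros t _. apply (continuous_minus (K:=R_AbsRing) (V:=R_NormedModule)); [auto|].
    apply (continuous_minus (K:=R_AbsRing) (V:=R_NormedModule)); auto. }
  rewrite H0, H1 in I. apply (is_RInt_unique (V:=R_CompleteNormedModule)) in I.
  rewrite (RInt_minus (V:=R_CompleteNormedModule) A (fun t => B t - C t)),
    (RInt_minus (V:=R_CompleteNormedModule) B C) in I by assumption.
  unfold Jint. unfold minus, plus, opp, zero in I; simpl in I. lra.
Qed.

(* Integration by parts against sin t cos t (a kern 1 1 + b kern 0 2), which vanishes at 0 and pi/2. *)
Lemma Jint_EPD_by_parts nu i j a b u1 u2 u3 : region nu u1 u2 u3 ->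
  (forall t,
     (1 - 2 * sin2 t) * (a * kern nu 1 1 t u1 u2 u3 + b * kern nu 0 2 t u1 u2 u3)
     + (u2 - u3) * sin2 t * (1 - sin2 t) *
       (a * (kern nu 1 2 t u1 u2 u3 - kern nu 2 1 t u1 u2 u3)
        + b * (kern nu 1 2 t u1 u2 u3 + 3 * kern nu 0 3 t u1 u2 u3))
     = 2 * (coord i u1 u2 u3 - coord j u1 u2 u3) * ddI_ker nu i j t u1 u2 u3
       - (dI_ker nu i t u1 u2 u3 - dI_ker nu j t u1 u2 u3)) ->
  2 * (coord i u1 u2 u3 - coord j u1 u2 u3) * Jint (fun t => ddI_ker nu i j t u1 u2 u3)
  = Jint (fun t => dI_ker nu i t u1 u2 u3) - Jint (fun t => dI_ker nu j t u1 u2 u3).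
Proof.
  intros HR Hid. set (c := 2 * (coord i u1 u2 u3 - coord j u1 u2 u3)).
  assert (Hc : c * Jint (fun t => ddI_ker nu i j t u1 u2 u3)
              = Jint (fun t => c * ddI_ker nu i j t u1 u2 u3)).
  { unfold Jint. rewrite (RInt_scal (V:=R_CompleteNormedModule)); [reflexivity|].
    apply (ex_RInt_continuous (V:=R_CompleteNormedModule)); intros; apply continuous_ddI_ker, HR. }
  rewrite Hc.
  apply (Jint_by_parts _ _ _
    (fun s => sin s * cos s * (a * kern nu 1 1 s u1 u2 u3 + b * kern nu 0 2 s u1 u2 u3))).
  - intros t. eapply is_derive_eq.
    + apply is_derive_Rmult; [auto_derive; reflexivity|].
      apply is_derive_Rplus; apply is_derive_Rscal, is_derive_kern_t, HR.
    + unfold c; etransitivity; [| apply Hid]. unfold sin2. rewrite ?S_INR, ?INR_0.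
      assert (E : cos t ^ 2 = 1 - sin t ^ 2) by (pose proof (sin2_cos2 t); unfold Rsqr in *; lra).
      ring_simplify. rewrite E. field.
  - intros t. apply (continuous_scal_r (K:=R_AbsRing) (V:=R_NormedModule) c), continuous_ddI_ker, HR.
  - intros t. apply continuous_dI_ker, HR.
  - intros t. apply continuous_dI_ker, HR.
  - rewrite sin_0. ring.
  - rewrite cos_PI2. ring.
Qed.

Lemma Jint_ddI_EPD nu i j u1 u2 u3 : region nu u1 u2 u3 ->
  (1 <= i <= 3)%nat -> (1 <= j <= 3)%nat -> i <> j ->
  2 * (coord i u1 u2 u3 - coord j u1 u2 u3) * Jint (fun t => ddI_ker nu i j t u1 u2 u3)
  = Jint (fun t => dI_ker nu i t u1 u2 u3) - Jint (fun t => dI_ker nu j t u1 u2 u3).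
Proof.
  intros HR Hi Hj Hij.
  destruct i as [|[|[|[|i]]]]; try lia; destruct j as [|[|[|[|j]]]]; try lia;
    [ apply (Jint_EPD_by_parts nu _ _ 0 1) | apply (Jint_EPD_by_parts nu _ _ 0 (-1))
    | apply (Jint_EPD_by_parts nu _ _ 0 (-1)) | apply (Jint_EPD_by_parts nu _ _ 1 1)
    | apply (Jint_EPD_by_parts nu _ _ 0 1) | apply (Jint_EPD_by_parts nu _ _ (-1) (-1)) ];
    try exact HR; intros t;
    pose proof (eta_nu_pos nu u1 u2 u3 t HR); pose proof (u1_eta_pos nu u1 u2 u3 t HR);
    unfold ddI_ker, dI_ker, kern, half_pow, d_u1_eta, d_eta, eta_nu, u1_eta in *; simpl;
    field; repeat split; lra.
Qed.

Lemma Jint_pos (A : R -> R) :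
  (forall t, continuous A t) -> (forall t, 0 < t < PI / 2 -> 0 < A t) -> 0 < Jint A.
Proof.
  intros cA pA. replace 0 with (RInt (fun _ => 0) 0 (PI / 2)) at 1.
  - apply RInt_lt; auto; [pose proof PI_RGT_0; lra | intros; apply continuous_const].
  - rewrite RInt_const. unfold scal; simpl; unfold mult; simpl; ring.
Qed.

Lemma Jint_opp (A : R -> R) : (forall t, continuous A t) -> Jint (fun t => - A t) = - Jint A.
Proof.
  intros cA. apply (RInt_opp (V:=R_CompleteNormedModule)).
  apply (ex_RInt_continuous (V:=R_CompleteNormedModule)); auto.
Qed.

Lemma sin2_open_bound t : 0 < t < PI / 2 -> 0 < sin2 t < 1.
Proof.
  intros Ht. pose proof PI_RGT_0. unfold sin2.
  pose proof (sin_gt_0 t ltac:(lra) ltac:(lra)). pose proof (cos_gt_0 t ltac:(lra) ltac:(lra)).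
  pose proof (sin2_cos2 t). unfold Rsqr in *. nra.
Qed.

Lemma Jint_I_ker_pos nu u1 u2 u3 : region nu u1 u2 u3 -> 0 < Jint (fun t => I_ker nu t u1 u2 u3).
Proof.
  intros HR. apply Jint_pos; intros t; [apply continuous_I_ker, HR|].
  intros _. unfold I_ker. pose proof (kern_pos nu 0 1 t u1 u2 u3 HR). lra.
Qed.

Lemma Jint_dI_ker_neq0 nu j u1 u2 u3 : region nu u1 u2 u3 -> (1 <= j <= 3)%nat ->
  Jint (fun t => dI_ker nu j t u1 u2 u3) <> 0.
Proof.
  intros HR Hj.
  pose proof (fun t => kern_pos nu 1 1 t u1 u2 u3 HR) as K11.
  pose proof (fun t => kern_pos nu 0 2 t u1 u2 u3 HR) as K02.
  assert (cdI : forall t, continuous (fun s => dI_ker nu j s u1 u2 u3) t)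
    by (intros; apply continuous_dI_ker, HR).
  destruct j as [|[|[|[|j]]]]; try lia.
  - assert (P : 0 < Jint (fun t => - dI_ker nu 1 t u1 u2 u3)).
    { apply Jint_pos; intros t.
      - apply (continuous_opp (V:=R_NormedModule) (fun s => dI_ker nu 1 s u1 u2 u3)), cdI.
      - intros _. unfold dI_ker; simpl. specialize (K02 t). lra. }
    rewrite Jint_opp in P by exact cdI. lra.
  - apply Rgt_not_eq, Jint_pos; [exact cdI|]. intros t Ht.
    pose proof (sin2_open_bound t Ht). specialize (K11 t); specialize (K02 t).
    unfold dI_ker; simpl. nra.
  - apply Rgt_not_eq, Jint_pos; [exact cdI|]. intros t Ht.
    pose proof (sin2_open_bound t Ht). specialize (K11 t); specialize (K02 t).
    unfold dI_ker; simpl. nra.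
Qed.

Lemma asin_nonneg z : 0 <= z <= 1 -> 0 <= asin z.
Proof.
  intros Hz. destruct (Rle_or_lt 0 (asin z)) as [H|H]; [exact H|].
  pose proof (asin_bound z) as [B1 B2].
  assert (sin (asin z) < 0).
  { destruct (Req_dec (asin z) (- (PI / 2))) as [E|E].
    - rewrite E, sin_neg, sin_PI2. lra.
    - apply sin_lt_0_var; lra. }
  rewrite sin_asin in H0 by lra. lra.
Qed.

Lemma asin_sqrt_compl s : 0 <= s <= 1 -> asin (sqrt s) = PI / 2 - asin (sqrt (1 - s)).
Proof.
  intros Hs.
  assert (Hz : 0 <= sqrt (1 - s) <= 1).
  { split; [apply sqrt_pos|].
    apply Rle_trans with (sqrt 1); [apply sqrt_le_1_alt; lra | rewrite sqrt_1; lra]. }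
  pose proof (asin_nonneg _ Hz). pose proof (asin_bound (sqrt (1 - s))). pose proof PI_RGT_0.
  rewrite <- (asin_sin (PI / 2 - asin (sqrt (1 - s)))) by lra.
  rewrite sin_shift, cos_asin, Rsqr_sqrt by lra. do 2 f_equal. ring.
Qed.

Lemma is_derive_asin z : -1 < z < 1 -> is_derive asin z (/ sqrt (1 - z ^ 2)).
Proof.
  intros Hz. apply is_derive_Reals, (derive_pt_eq asin z _ (derivable_pt_asin z Hz)).
  rewrite derive_pt_asin. unfold Rsqr, Rdiv. rewrite Rmult_1_l. do 3 f_equal. ring.
Qed.

Lemma continuous_asin_sqrt (g : R -> R) x : continuous g x -> g x = 0 ->
  continuous (fun y => asin (sqrt (g y))) x.
Proof.
  intros Hg E. apply (continuous_comp (fun y => sqrt (g y)) asin).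
  - apply (continuous_comp g sqrt); [exact Hg|]. rewrite E.
    apply continuity_pt_filterlim, continuity_pt_sqrt. lra.
  - rewrite E, sqrt_0. apply (continuous_of_is_derive _ _ _ (is_derive_asin 0 ltac:(lra))).
Qed.

Definition I_integrand (nu u1 u2 u3 eta : R) : R :=
  (eta + nu) / sqrt ((eta + nu) * (u1 - eta) * (u2 - eta) * (eta - u3)).

(* The inverse of the substitution: the t in [0, pi/2] with eta = u3 + (u2 - u3) sin^2 t. *)
Definition eta_angle (u2 u3 x : R) : R := asin (sqrt ((x - u3) / (u2 - u3))).

Definition I_primitive (nu u1 u2 u3 x : R) : R :=
  RInt (fun t => I_ker nu t u1 u2 u3) 0 (eta_angle u2 u3 x).

Lemma is_derive_eta_angle u2 u3 x : u3 < x < u2 ->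
  is_derive (eta_angle u2 u3) x (/ (2 * sqrt (x - u3) * sqrt (u2 - x))).
Proof.
  intros Hx. set (s := (x - u3) / (u2 - u3)).
  assert (Hs : 0 < s < 1).
  { unfold s. split; [apply Rdiv_lt_0_compat; lra|].
    apply (Rmult_lt_reg_r (u2 - u3)); [lra|]. field_simplify; lra. }
  assert (Hz : 0 < sqrt s < 1).
  { split; [apply sqrt_lt_R0; lra|]. rewrite <- sqrt_1. apply sqrt_lt_1_alt; lra. }
  assert (Ds : is_derive (fun y => (y - u3) / (u2 - u3)) x (/ (u2 - u3)))
    by (auto_derive; [lra | field; lra]).
  eapply is_derive_eq; [exact (is_derive_Rcomp asin (fun y => sqrt ((y - u3) / (u2 - u3))) x _ _
    (is_derive_asin (sqrt s) ltac:(lra)) (is_derive_sqrt _ _ _ Ds (proj1 Hs)))|].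
  rewrite <- Rsqr_pow2, Rsqr_sqrt by lra.
  assert (Es : sqrt s = sqrt (x - u3) / sqrt (u2 - u3)) by (apply sqrt_div_alt; lra).
  assert (E1 : sqrt (1 - s) = sqrt (u2 - x) / sqrt (u2 - u3)).
  { rewrite <- sqrt_div_alt by lra. f_equal. unfold s. field. lra. }
  fold s. rewrite Es, E1.
  assert (0 < sqrt (x - u3)) by (apply sqrt_lt_R0; lra).
  assert (0 < sqrt (u2 - x)) by (apply sqrt_lt_R0; lra).
  assert (0 < sqrt (u2 - u3)) by (apply sqrt_lt_R0; lra).
  assert (E2 : sqrt (u2 - u3) * sqrt (u2 - u3) = u2 - u3) by (apply sqrt_sqrt; lra).
  set (A := sqrt (u2 - u3)) in *. rewrite <- E2. field. repeat split; lra.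
Qed.

Lemma I_ker_eta_angle nu u1 u2 u3 x : region nu u1 u2 u3 -> u3 < x < u2 ->
  I_ker nu (eta_angle u2 u3 x) u1 u2 u3 = 2 * sqrt (x + nu) / sqrt (u1 - x).
Proof.
  intros [H1 [H2 H3]] Hx.
  assert (Hs : 0 <= (x - u3) / (u2 - u3) <= 1).
  { split; [apply Rdiv_le_0_compat; lra|].
    apply (Rmult_le_reg_r (u2 - u3)); [lra|]. field_simplify; lra. }
  assert (E : sin2 (eta_angle u2 u3 x) = (x - u3) / (u2 - u3)).
  { unfold sin2, eta_angle. rewrite sin_asin, <- Rsqr_pow2, Rsqr_sqrt; [reflexivity | lra|].
    split; [pose proof (sqrt_pos ((x - u3) / (u2 - u3))); lra|].
    rewrite <- sqrt_1. apply sqrt_le_1_alt; lra. }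
  unfold I_ker, kern, half_pow, eta_nu, u1_eta. rewrite E.
  replace (nu + u3 + (u2 - u3) * ((x - u3) / (u2 - u3))) with (x + nu) by (field; lra).
  replace (u1 - u3 - (u2 - u3) * ((x - u3) / (u2 - u3))) with (u1 - x) by (field; lra).
  assert (0 < sqrt (u1 - x)) by (apply sqrt_lt_R0; lra).
  assert (sqrt (u1 - x) * sqrt (u1 - x) = u1 - x) by (apply sqrt_sqrt; lra).
  rewrite <- H0 at 2. simpl. field. lra.
Qed.

Lemma is_derive_RInt_I_ker nu u1 u2 u3 z : region nu u1 u2 u3 ->
  is_derive (fun y => RInt (fun t => I_ker nu t u1 u2 u3) 0 y) z (I_ker nu z u1 u2 u3).
Proof.
  intros HR.
  apply (is_derive_RInt (V:=R_NormedModule) (fun t => I_ker nu t u1 u2 u3)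
           (fun y => RInt (fun t => I_ker nu t u1 u2 u3) 0 y) 0 z);
    [apply filter_forall; intros y | apply continuous_I_ker, HR].
  apply (RInt_correct (V:=R_CompleteNormedModule)), (ex_RInt_continuous (V:=R_CompleteNormedModule)).
  intros; apply continuous_I_ker, HR.
Qed.

Lemma is_derive_I_primitive nu u1 u2 u3 x : region nu u1 u2 u3 -> u3 < x < u2 ->
  is_derive (I_primitive nu u1 u2 u3) x (I_integrand nu u1 u2 u3 x).
Proof.
  intros HR Hx. pose proof HR as [H1 [H2 H3]].
  eapply is_derive_eq; [exact (is_derive_Rcomp _ (eta_angle u2 u3) x _ _
    (is_derive_RInt_I_ker nu u1 u2 u3 _ HR) (is_derive_eta_angle u2 u3 x Hx))|].
  rewrite I_ker_eta_angle by assumption. unfold I_integrand.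
  rewrite !sqrt_mult_alt by (repeat apply Rmult_le_pos; lra).
  assert (EA : sqrt (x + nu) * sqrt (x + nu) = x + nu) by (apply sqrt_sqrt; lra).
  assert (0 < sqrt (x + nu)) by (apply sqrt_lt_R0; lra).
  assert (0 < sqrt (u1 - x)) by (apply sqrt_lt_R0; lra).
  assert (0 < sqrt (u2 - x)) by (apply sqrt_lt_R0; lra).
  assert (0 < sqrt (x - u3)) by (apply sqrt_lt_R0; lra).
  set (A := sqrt (x + nu)) in *. rewrite <- EA. field. repeat split; lra.
Qed.

Lemma continuous_I_integrand nu u1 u2 u3 x : region nu u1 u2 u3 -> u3 < x < u2 ->
  continuous (I_integrand nu u1 u2 u3) x.
Proof.
  intros [H1 [H2 H3]] Hx.
  assert (P : 0 < (x + nu) * (u1 - x) * (u2 - x) * (x - u3)) by (repeat apply Rmult_lt_0_compat; lra).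
  apply (ex_derive_continuous (K:=R_AbsRing) (V:=R_NormedModule)).
  unfold I_integrand. auto_derive. split; [exact P | split; [apply Rgt_not_eq, sqrt_lt_R0, P | exact I]].
Qed.

Lemma continuous_RInt_I_ker nu u1 u2 u3 z : region nu u1 u2 u3 ->
  continuous (fun y => RInt (fun t => I_ker nu t u1 u2 u3) 0 y) z.
Proof. intros HR. exact (continuous_of_is_derive _ _ _ (is_derive_RInt_I_ker nu u1 u2 u3 z HR)). Qed.

Lemma I_primitive_at_right nu u1 u2 u3 : region nu u1 u2 u3 ->
  filterlim (I_primitive nu u1 u2 u3) (at_right u3) (locally 0).
Proof.
  intros HR. pose proof HR as [H1 [H2 H3]].
  apply (filterlim_filter_le_1 (F := locally u3)); [apply filter_le_within|].
  replace (locally 0) with (locally (I_primitive nu u1 u2 u3 u3)).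
  - apply (continuous_comp (eta_angle u2 u3) (fun y => RInt (fun t => I_ker nu t u1 u2 u3) 0 y));
      [| apply continuous_RInt_I_ker, HR].
    apply continuous_asin_sqrt; [| unfold Rdiv; ring].
    apply (continuous_of_is_derive _ _ (/ (u2 - u3))). auto_derive; [lra | field; lra].
  - unfold I_primitive, eta_angle. rewrite Rminus_diag, Rdiv_0_l, sqrt_0, asin_0, RInt_point. reflexivity.
Qed.

Lemma I_primitive_at_left nu u1 u2 u3 : region nu u1 u2 u3 ->
  filterlim (I_primitive nu u1 u2 u3) (at_left u2) (locally (Jint (fun t => I_ker nu t u1 u2 u3))).
Proof.
  intros HR. pose proof HR as [H1 [H2 H3]].
  set (G x := RInt (fun t => I_ker nu t u1 u2 u3) 0 (PI / 2 - asin (sqrt ((u2 - x) / (u2 - u3))))).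
  apply (filterlim_ext_loc G).
  { exists (mkposreal (u2 - u3) ltac:(lra)). intros y Hy Hy2.
    change (Rabs (y - u2) < u2 - u3) in Hy. apply Rabs_def2 in Hy.
    unfold G, I_primitive, eta_angle. rewrite (asin_sqrt_compl ((y - u3) / (u2 - u3))).
    - replace (1 - (y - u3) / (u2 - u3)) with ((u2 - y) / (u2 - u3)) by (field; lra).
      reflexivity.
    - split; [apply Rdiv_le_0_compat; lra|].
      apply (Rmult_le_reg_r (u2 - u3)); [lra|]. field_simplify; lra. }
  apply (filterlim_filter_le_1 (F := locally u2)); [apply filter_le_within|].
  replace (Jint (fun t => I_ker nu t u1 u2 u3)) with (G u2).
  - apply (continuous_comp (fun x => PI / 2 - asin (sqrt ((u2 - x) / (u2 - u3))))
             (fun y => RInt (fun t => I_ker nu t u1 u2 u3) 0 y)); [| apply continuous_RInt_I_ker, HR].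
    apply (continuous_minus (K:=R_AbsRing) (V:=R_NormedModule) (fun _ => PI / 2));
      [apply continuous_const|].
    apply continuous_asin_sqrt; [| unfold Rdiv; ring].
    apply (continuous_of_is_derive _ _ (- / (u2 - u3))). auto_derive; [lra | field; lra].
  - unfold G, Jint. rewrite Rminus_diag, Rdiv_0_l, sqrt_0, asin_0, Rminus_0_r. reflexivity.
Qed.

Lemma Iint_eq_Jint nu u1 u2 u3 : region nu u1 u2 u3 ->
  Iint nu u1 u2 u3 = Jint (fun t => I_ker nu t u1 u2 u3).
Proof.
  intros HR. pose proof HR as [H1 [H2 H3]].
  unfold Iint. apply (is_RInt_gen_unique (V:=R_CompleteNormedModule)).
  set (m := (u3 + u2) / 2).
  assert (Inside : filter_prod (at_right u3) (at_left u2)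
     (fun ab : R * R => forall x, Rmin (fst ab) (snd ab) <= x <= Rmax (fst ab) (snd ab) -> u3 < x < u2)).
  { apply (Filter_prod _ _ _ (fun a => u3 < a < m) (fun b => m < b < u2)).
    - exists (mkposreal (m - u3) ltac:(unfold m; lra)). intros y Hy Hy2.
      change (Rabs (y - u3) < m - u3) in Hy. apply Rabs_def2 in Hy. lra.
    - exists (mkposreal (u2 - m) ltac:(unfold m; lra)). intros y Hy Hy2.
      change (Rabs (y - u2) < u2 - m) in Hy. apply Rabs_def2 in Hy. lra.
    - intros a b Ha Hb x. simpl. rewrite Rmin_left, Rmax_right by lra. lra. }
  assert (D : forall x, u3 < x < u2 -> is_derive (I_primitive nu u1 u2 u3) x (I_integrand nu u1 u2 u3 x))
    by (intros; apply is_derive_I_primitive; assumption).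
  rewrite <- (Rminus_0_r (Jint _)).
  apply (is_RInt_gen_ext (Derive (I_primitive nu u1 u2 u3))).
  - eapply filter_imp; [| exact Inside]. intros ab Hab x Hx.
    apply is_derive_unique, D, Hab. lra.
  - apply is_RInt_gen_Derive; [eapply filter_imp; [| exact Inside]; intros ab Hab x Hx .. | |].
    + eexists. apply D, Hab, Hx.
    + apply (continuous_ext_loc _ (I_integrand nu u1 u2 u3)).
      * specialize (Hab x Hx). exists (mkposreal (Rmin (x - u3) (u2 - x)) ltac:(apply Rmin_pos; lra)).
        intros y Hy. change (Rabs (y - x) < Rmin (x - u3) (u2 - x)) in Hy. apply Rabs_def2 in Hy.
        pose proof (Rmin_l (x - u3) (u2 - x)). pose proof (Rmin_r (x - u3) (u2 - x)).
        symmetry. apply is_derive_unique, D. lra.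
      * apply continuous_I_integrand, Hab, Hx; exact HR.
    + apply I_primitive_at_right, HR.
    + apply I_primitive_at_left, HR.
Qed.

(** * The equations for w *)

Lemma coord_sub_neq0 nu i j u1 u2 u3 : region nu u1 u2 u3 ->
  (1 <= i <= 3)%nat -> (1 <= j <= 3)%nat -> i <> j ->
  coord i u1 u2 u3 - coord j u1 u2 u3 <> 0.
Proof.
  intros [_ [H32 H21]] Hi Hj Hij.
  destruct i as [|[|[|[|i]]]]; try lia; destruct j as [|[|[|[|j]]]]; try lia; simpl; lra.
Qed.

Lemma is_derive_Iint_along nu j u1 u2 u3 : region nu u1 u2 u3 ->
  is_derive (along j (Iint nu) u1 u2 u3) (coord j u1 u2 u3) (Jint (fun t => dI_ker nu j t u1 u2 u3)).
Proof.
  intros HR. eapply is_derive_Rext_loc; [| exact (is_derive_Jint_I_along nu j u1 u2 u3 HR)].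
  eapply filter_imp; [| exact (region_along_locally nu j u1 u2 u3 HR)]. intros y Hy.
  symmetry. apply (along_ext_in j (region nu)); [intros; apply Iint_eq_Jint; assumption | exact Hy].
Qed.

Lemma pd_Iint nu j u1 u2 u3 : region nu u1 u2 u3 ->
  pd j (Iint nu) u1 u2 u3 = Jint (fun t => dI_ker nu j t u1 u2 u3).
Proof. intros HR. rewrite pd_along. apply is_derive_unique, is_derive_Iint_along, HR. Qed.

Lemma Iint_pos nu u1 u2 u3 : region nu u1 u2 u3 -> 0 < Iint nu u1 u2 u3.
Proof. intros HR. rewrite Iint_eq_Jint by exact HR. apply Jint_I_ker_pos, HR. Qed.

Lemma pd_Iint_neq0 nu j u1 u2 u3 : region nu u1 u2 u3 -> (1 <= j <= 3)%nat ->
  pd j (Iint nu) u1 u2 u3 <> 0.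
Proof. intros HR Hj. rewrite pd_Iint by exact HR. apply Jint_dI_ker_neq0; assumption. Qed.

Lemma Iint_EPD nu i j u1 u2 u3 : region nu u1 u2 u3 ->
  (1 <= i <= 3)%nat -> (1 <= j <= 3)%nat -> i <> j ->
  is_derive (along j (pd i (Iint nu)) u1 u2 u3) (coord j u1 u2 u3)
    ((pd i (Iint nu) u1 u2 u3 - pd j (Iint nu) u1 u2 u3) / (2 * (coord i u1 u2 u3 - coord j u1 u2 u3))).
Proof.
  intros HR Hi Hj Hij. pose proof (coord_sub_neq0 nu i j u1 u2 u3 HR Hi Hj Hij).
  eapply is_derive_Rext_loc.
  - eapply filter_imp; [| exact (region_along_locally nu j u1 u2 u3 HR)]. intros y Hy.
    symmetry. apply (along_ext_in j (region nu)); [intros; apply pd_Iint; assumption | exact Hy].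
  - eapply is_derive_eq; [exact (is_derive_Jint_dI_along nu i j u1 u2 u3 HR)|].
    rewrite !pd_Iint, <- Jint_ddI_EPD by assumption. field. lra.
Qed.

Lemma is_derive_w_of_EPD (W I Ii Q Qi : R -> R) (x Ij Qj d : R) :
  d <> 0 -> I x <> 0 -> Ii x <> 0 -> Ij <> 0 ->
  locally x (fun y => - (I y / Ii y) * Qi y + Q y = W y) ->
  is_derive I x Ij -> is_derive Ii x ((Ii x - Ij) / (2 * d)) ->
  is_derive Q x Qj -> is_derive Qi x ((Qi x - Qj) / (2 * d)) ->
  is_derive W x (/ 2 * (- (I x / Ii x) - 2 * d) / (- (I x / Ij) * d)
                 * ((- (I x / Ii x) * Qi x + Q x) - (- (I x / Ij) * Qj + Q x))).
Proof.
  intros Hd HI HIi HIj HW DI DIi DQ DQi.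
  eapply is_derive_Rext_loc; [exact HW|].
  eapply is_derive_eq.
  - apply is_derive_Rplus; [| exact DQ]. apply is_derive_Rmult; [| exact DQi].
    apply is_derive_Ropp, (is_derive_div I Ii); eassumption.
  - cbv beta. set (A := I x) in *; set (B := Ii x) in *; set (C := Qi x) in *; set (D := Q x).
    field. repeat split; assumption.
Qed.

Lemma lam_ext_interior nu i u1 u2 u3 : u3 < u2 -> u2 < u1 -> lam_ext nu i u1 u2 u3 = lam nu i u1 u2 u3.
Proof.
  intros H1 H2. unfold lam_ext.
  destruct (Rlt_dec u3 u2); [|lra]. destruct (Rlt_dec u2 u1); [reflexivity | lra].
Qed.

Lemma lam_sub_gam nu i u1 u2 u3 :
  lam nu i u1 u2 u3 - gam nu u1 u2 u3 = - (Iint nu u1 u2 u3 / pd i (Iint nu) u1 u2 u3).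
Proof. unfold lam. ring. Qed.

Lemma along_wfun nu q i j u1 u2 u3 y : alongP j (region nu) u1 u2 u3 y ->
  along j (wfun nu q i) u1 u2 u3 y =
  - (along j (Iint nu) u1 u2 u3 y / along j (pd i (Iint nu)) u1 u2 u3 y) * along j (pd i q) u1 u2 u3 y
  + along j q u1 u2 u3 y.
Proof.
  assert (E : forall x1 x2 x3, region nu x1 x2 x3 ->
    wfun nu q i x1 x2 x3 = - (Iint nu x1 x2 x3 / pd i (Iint nu) x1 x2 x3) * pd i q x1 x2 x3 + q x1 x2 x3).
  { intros x1 x2 x3 [_ [H32 H21]]. unfold wfun. rewrite lam_ext_interior, lam_sub_gam by assumption. ring. }
  intros Hy. destruct j as [|[|[|j]]]; apply E, Hy.
Qed.

Lemma wfun_is_derive nu q i j u1 u2 u3 : region nu u1 u2 u3 ->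
  (1 <= i <= 3)%nat -> (1 <= j <= 3)%nat -> i <> j ->
  is_derive (along j q u1 u2 u3) (coord j u1 u2 u3) (pd j q u1 u2 u3) ->
  is_derive (along j (pd i q) u1 u2 u3) (coord j u1 u2 u3)
    ((pd i q u1 u2 u3 - pd j q u1 u2 u3) / (2 * (coord i u1 u2 u3 - coord j u1 u2 u3))) ->
  is_derive (along j (wfun nu q i) u1 u2 u3) (coord j u1 u2 u3)
    (Bcoef nu i j u1 u2 u3 * (wfun nu q i u1 u2 u3 - wfun nu q j u1 u2 u3)).
Proof.
  intros HR Hi Hj Hij Dq Dqi. pose proof HR as [_ [H32 H21]].
  eapply is_derive_eq; [apply (is_derive_w_of_EPD _ (along j (Iint nu) u1 u2 u3)
    (along j (pd i (Iint nu)) u1 u2 u3) (along j q u1 u2 u3) (along j (pd i q) u1 u2 u3) _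
    (pd j (Iint nu) u1 u2 u3) (pd j q u1 u2 u3) (coord i u1 u2 u3 - coord j u1 u2 u3))|];
    rewrite ?along_coord.
  - apply (coord_sub_neq0 nu); assumption.
  - apply Rgt_not_eq, Iint_pos, HR.
  - apply pd_Iint_neq0; assumption.
  - apply pd_Iint_neq0; assumption.
  - eapply filter_imp; [| exact (region_along_locally nu j u1 u2 u3 HR)].
    intros y Hy. symmetry. apply along_wfun, Hy.
  - pose proof (is_derive_Iint_along nu j u1 u2 u3 HR) as D. now rewrite <- pd_Iint in D.
  - apply Iint_EPD; assumption.
  - exact Dq.
  - exact Dqi.
  - unfold Bcoef, wfun. rewrite !lam_ext_interior, !lam_sub_gam by assumption. reflexivity.
Qed.

Lemma region_of_interval nu a b u1 u2 u3 : Rbar_le (Finite (- nu)) a ->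
  in_interval a b u3 -> u3 < u2 -> u2 < u1 -> region nu u1 u2 u3.
Proof.
  intros Ha [H3 _] H32 H21. split; [| split; assumption].
  destruct a as [a| |]; simpl in *; [lra | contradiction | contradiction].
Qed.

Theorem theorem5p1 (nu : R) (a b : Rbar) (f : R -> R) (q : R -> R -> R -> R) :
  Rbar_le (Finite (- nu)) a -> Rbar_lt a b ->
  smooth1 (in_interval a b) f ->
  smooth3 (fun u1 u2 u3 => in_interval a b u1 /\ in_interval a b u2 /\
                           in_interval a b u3) q ->
  (forall (i j : nat) (u1 u2 u3 : R),
     (1 <= i <= 3)%nat -> (1 <= j <= 3)%nat ->
     in_interval a b u1 -> in_interval a b u2 -> in_interval a b u3 ->
     2 * (coord i u1 u2 u3 - coord j u1 u2 u3) * pd i (pd j q) u1 u2 u3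
     = pd i q u1 u2 u3 - pd j q u1 u2 u3) ->
  (forall u, in_interval a b u -> q u u u = f u) ->
  (forall (i j : nat) (u1 u2 u3 : R),
     (1 <= i <= 3)%nat -> (1 <= j <= 3)%nat -> i <> j ->
     in_interval a b u1 -> in_interval a b u2 -> in_interval a b u3 ->
     u3 < u2 -> u2 < u1 ->
     is_derive (along j (wfun nu q i) u1 u2 u3) (coord j u1 u2 u3)
       (Bcoef nu i j u1 u2 u3 * (wfun nu q i u1 u2 u3 - wfun nu q j u1 u2 u3))) /\
  (forall u1 u3 : R,
     in_interval a b u1 -> in_interval a b u3 -> u3 < u1 ->
     wfun nu q 1 u1 u1 u3 = wfun nu q 2 u1 u1 u3 /\
     wfun nu q 3 u1 u1 u3 = f u3 /\
     wfun nu q 1 u1 u3 u3 = f u1 /\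
     wfun nu q 2 u1 u3 u3 = wfun nu q 3 u1 u3 u3).
Proof.
  intros Hnu _ _ Hq Hpde Hdiag. split; [| exact (wfun_boundary a b f q Hq Hpde Hdiag nu)].
  intros i j u1 u2 u3 Hi Hj Hij Hu1 Hu2 Hu3 H32 H21.
  assert (Hbox : box3 a b u1 u2 u3) by exact (conj Hu1 (conj Hu2 Hu3)).
  assert (HR : region nu u1 u2 u3) by exact (region_of_interval nu a b u1 u2 u3 Hnu Hu3 H32 H21).
  apply wfun_is_derive; [assumption .. | |].
  - exact (is_derive_along _ q j u1 u2 u3 (Hq 1%nat) Hbox).
  - pose proof (Hpde j i u1 u2 u3 Hj Hi Hu1 Hu2 Hu3) as Pji.
    pose proof (coord_sub_neq0 nu i j u1 u2 u3 HR Hi Hj Hij).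
    eapply is_derive_eq; [exact (is_derive_along _ (pd i q) j u1 u2 u3 (Ck3_pd _ _ _ i (Hq 2%nat)) Hbox)|].
    apply (Rmult_eq_reg_l (2 * (coord j u1 u2 u3 - coord i u1 u2 u3))); [rewrite Pji; field|]; lra.
Qed.
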